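(* Let $A\in\mathbb{R}^{n\times n}$ be an invertible M-matrix, partitioned as $A=\begin{bmatrix} A_{11} & A_{12}\\ A_{21} & A_{22}\end{bmatrix}$ with square diagonal blocks $A_{11}\in\mathbb{R}^{k\times k}$, $A_{22}\in\mathbb{R}^{(n-k)\times(n-k)}$. Let $M_{11},N_{11}\in\mathbb{R}^{k\times k}$, $M_{22},N_{22}\in\mathbb{R}^{(n-k)\times(n-k)}$, $M_{21},N_{21}\in\mathbb{R}^{(n-k)\times k}$, and suppose that both pairs \[ M' = \begin{bmatrix} M_{11} & 0\\ M_{21} & M_{22}\end{bmatrix},\quad N' = \begin{bmatrix} N_{11} & -A_{12}\\ N_{21} & N_{22}\end{bmatrix} \qquad\text{and}\qquad \hat{M} = \begin{bmatrix} M_{11} & A_{12}\\ 0 & M_{22}\end{bmatrix},\quad \hat{N} = \begin{bmatrix} N_{11} & 0\\ -A_{21} & N_{22}\end{bmatrix} \] are regular splittings of $A$. Then $\rho(\hat{M}^{-1}\hat{N}) \leq \rho((M')^{-1}N')$.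
   Context: A regular splitting of $A$ is a pair $(M,N)$ with $M$ an invertible M-matrix, $N\geq 0$ entrywise, and $A=M-N$. $\rho(\cdot)$ denotes the spectral radius. *)

From HB Require Import structures.
From mathcomp Require Import all_boot all_order all_algebra.
From mathcomp Require Import reals.
From mathcomp Require Import complex.
Set Implicit Arguments. Unset Strict Implicit. Unset Printing Implicit Defensive.
Import Order.TTheory GRing.Theory Num.Theory.
Local Open Scope ring_scope.

(* The (complex) eigenvalues of a real square matrix, with algebraic
   multiplicity: the roots of the characteristic polynomial over R[i]. *)
Definition eigenvalues (R : realType) (n : nat) (A : 'M[R]_n) : seq R[i] :=
  sval (closed_field_poly_normal
          (char_poly (map_mx (fun x : R => (x%:C)%C) A))).

(* Spectral radius: max modulus of the (complex) eigenvalues (0 if n = 0). *)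
Definition spectral_radius (R : realType) (n : nat) (A : 'M[R]_n) : R :=
  \big[Num.max/0]_(z <- eigenvalues A) Normc.normc z.

Definition nonneg_mx (R : realType) (m n : nat) (A : 'M[R]_(m, n)) : Prop :=
  forall i j, 0 <= A i j.

Definition invertible_M_matrix (R : realType) (n : nat) (A : 'M[R]_n) : Prop :=
  exists (s : R) (B : 'M[R]_n),
    nonneg_mx B /\ spectral_radius B < s /\ A = s%:M - B.

Definition regular_splitting (R : realType) (n : nat) (A M N : 'M[R]_n) : Prop :=
  invertible_M_matrix M /\ nonneg_mx N /\ A = M - N.

From HB Require Import structures.
From mathcomp Require Import all_boot all_order all_algebra.
From mathcomp Require Import reals complex.
From mathcomp Require Import ring lra.
From mathcomp Require Import classical_sets boolp.
Import Order.TTheory GRing.Theory Num.Theory.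
Local Open Scope ring_scope.

Set Implicit Arguments.
Unset Strict Implicit.

(* Call C inverse-nonnegative if C is invertible with C^-1 >= 0.  When M is
   inverse-nonnegative and N >= 0, for every a > 0,
     rho(M^-1 N) < a  <->  a M - N is inverse-nonnegative.
   Left to right: u I - M^-1 N is inverse-nonnegative for all large u, and the
   set of such u is open, and closed in (rho, oo) where u I - M^-1 N stays
   invertible.  Right to left: a Perron-type argument on the moduli of a left
   eigenvector.
   Take a > rho(M'^-1 N').  If a >= 1, then rho(Mh^-1 Nh) < 1 because
   1 Mh - Nh = A is an M-matrix.  If a < 1, then a M' - N' is
   inverse-nonnegative and
     (a Mh - Nh) D = D (a M' - N') + E
   with D = diag(a I, I) and E = [0 0; (1-a) N21 0] >= 0,
   so y := D (a M' - N')^-1 1 >= 0 satisfies (a Mh - Nh) y > 0.  A Z-matrix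
   with such a positive supersolution is inverse-nonnegative, hence
   rho(Mh^-1 Nh) < a. *)

Lemma ler_term_sum (R : numDomainType) (I : finType) (F : I -> R) i :
  (forall j, 0 <= F j) -> F i <= \sum_j F j.
Proof. by move=> F_ge0; rewrite (bigD1 i) //= lerDl sumr_ge0. Qed.

Section MatrixOrder.
Variable R : realType.

Definition Zmatrix n (A : 'M[R]_n) := forall i j, i != j -> A i j <= 0.

Definition inverse_nonneg n (A : 'M[R]_n) := A \in unitmx /\ nonneg_mx (invmx A).

Lemma nonneg_mx0 m n : nonneg_mx (0 : 'M[R]_(m, n)).
Proof. by move=> i j; rewrite mxE. Qed.

Lemma nonneg_scalar_mx n a : 0 <= a -> nonneg_mx (a%:M : 'M[R]_n).
Proof. by move=> a_ge0 i j; rewrite mxE mulrn_wge0. Qed.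

Lemma nonneg_const_mx m n a : 0 <= a -> nonneg_mx (const_mx a : 'M[R]_(m, n)).
Proof. by move=> a_ge0 i j; rewrite mxE. Qed.

Lemma nonneg_mxD m n (X Y : 'M[R]_(m, n)) :
  nonneg_mx X -> nonneg_mx Y -> nonneg_mx (X + Y).
Proof. by move=> X_ge0 Y_ge0 i j; rewrite mxE addr_ge0. Qed.

Lemma nonneg_mxZ m n a (X : 'M[R]_(m, n)) :
  0 <= a -> nonneg_mx X -> nonneg_mx (a *: X).
Proof. by move=> a_ge0 X_ge0 i j; rewrite mxE mulr_ge0. Qed.

Lemma nonneg_mxM m n p (X : 'M[R]_(m, n)) (Y : 'M[R]_(n, p)) :
  nonneg_mx X -> nonneg_mx Y -> nonneg_mx (X *m Y).
Proof.
by move=> X_ge0 Y_ge0 i j; rewrite mxE; apply: sumr_ge0 => k _; apply: mulr_ge0.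
Qed.

Lemma nonneg_block_mx m1 m2 n1 n2 (X11 : 'M[R]_(m1, n1)) (X12 : 'M[R]_(m1, n2))
    (X21 : 'M[R]_(m2, n1)) (X22 : 'M[R]_(m2, n2)) :
  nonneg_mx X11 -> nonneg_mx X12 -> nonneg_mx X21 -> nonneg_mx X22 ->
  nonneg_mx (block_mx X11 X12 X21 X22).
Proof.
move=> ge0_11 ge0_12 ge0_21 ge0_22 i j.
by case: (split_ordP i) => i' ->; case: (split_ordP j) => j' ->;
  rewrite ?block_mxEul ?block_mxEur ?block_mxEdl ?block_mxEdr.
Qed.

Lemma Zmatrix_scale_sub n a (M N : 'M[R]_n) :
  0 <= a -> Zmatrix M -> nonneg_mx N -> Zmatrix (a *: M - N).
Proof.
move=> a_ge0 M_Z N_ge0 i j ij; rewrite !mxE subr_le0.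
exact: le_trans (mulr_ge0_le0 a_ge0 (M_Z i j ij)) (N_ge0 i j).
Qed.

Lemma Zmatrix_scalar_sub n t (B : 'M[R]_n) : nonneg_mx B -> Zmatrix (t%:M - B).
Proof.
by move=> B_ge0 i j ij; rewrite !mxE (negbTE ij) mulr0n sub0r oppr_le0.
Qed.

Section ZmatrixCriterion.
Variables (n : nat) (Y : 'M[R]_n) (x : 'cV[R]_n).
Hypotheses (Y_Z : Zmatrix Y) (x_ge0 : nonneg_mx x).
Hypothesis Yx_gt0 : forall i, 0 < (Y *m x) i 0.

Lemma Zmatrix_supersolution_gt0 i : 0 < x i 0.
Proof.
rewrite lt_def x_ge0 andbT; apply/eqP => xi0.
have := Yx_gt0 i; rewrite mxE; apply/negP; rewrite -leNgt.
apply: sumr_le0 => j _; have [<-|ij] := eqVneq i j; first by rewrite xi0 mulr0.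
by rewrite mulr_le0_ge0 ?Y_Z.
Qed.

(* Compare u with its largest negative multiple t x below it: at an index
   where u i = t x i, the Z-sign pattern gives (Y u) i <= t (Y x) i < 0. *)
Lemma Zmatrix_minimum_principle (u : 'cV[R]_n) :
  nonneg_mx (Y *m u) -> nonneg_mx u.
Proof.
move=> Yu_ge0 i0 j0; rewrite ord1 leNgt; apply/negP => ui0_lt0.
have x_gt0 := Zmatrix_supersolution_gt0.
case: (@arg_minP _ _ _ i0 xpredT (fun i => u i 0 / x i 0) isT) => i _ i_min.
set t := u i 0 / x i 0 in i_min.
have t_lt0 : t < 0.
  by apply: le_lt_trans (i_min i0 isT) _; rewrite pmulr_llt0 ?invr_gt0.
have tx_le_u j : t * x j 0 <= u j 0 by rewrite -ler_pdivlMr ?i_min.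
suff : (Y *m u) i 0 < 0 by rewrite ltNge Yu_ge0.
apply: (le_lt_trans (y := t * (Y *m x) i 0)); last by rewrite nmulr_rlt0.
rewrite !mxE mulr_sumr; apply: ler_sum => j _; rewrite mulrCA.
have [<-|ij] := eqVneq i j; first by rewrite /t divfK ?gt_eqF.
by rewrite ler_wnM2l ?Y_Z.
Qed.

Lemma Zmatrix_inverse_nonneg : inverse_nonneg Y.
Proof.
have Y_unit : Y \in unitmx.
  rewrite unitmxE unitfE -det_tr; apply/negP => /det0P [v v_neq0 vY].
  have Yv0 : Y *m v^T = 0 by rewrite -[Y]trmxK -trmx_mul vY trmx0.
  have ge0_0 : nonneg_mx (Y *m v^T) by rewrite Yv0; apply: nonneg_mx0.
  have ge0_N0 : nonneg_mx (Y *m - v^T).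
    by rewrite mulmxN Yv0 oppr0; apply: nonneg_mx0.
  move/negP: v_neq0; apply; apply/eqP/matrixP => a b; rewrite ord1 !mxE.
  apply/eqP; rewrite eq_le -oppr_ge0.
  have := Zmatrix_minimum_principle ge0_N0 b 0; rewrite !mxE => ->.
  by have := Zmatrix_minimum_principle ge0_0 b 0; rewrite mxE => ->.
split=> // i j.
have := @Zmatrix_minimum_principle (invmx Y *m delta_mx j 0).
rewrite mulmxA mulmxV // mul1mx -colE => /(_ _ i 0); rewrite mxE; apply.
by move=> a b; rewrite mxE ler0n.
Qed.

End ZmatrixCriterion.

End MatrixOrder.

Section Spectrum.
Variable R : realType.
Local Notation complexify T := (map_mx (real_complex R) T).

Lemma normc_ge0 (z : R[i]) : 0 <= Normc.normc z.
Proof. by case: z => a b; apply: sqrtr_ge0. Qed.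

Lemma normc_real (t : R) : Normc.normc (t%:C)%C = `|t|.
Proof. by rewrite /Normc.normc /= expr0n /= addr0 sqrtr_sqr. Qed.

Lemma normc_sum_le (I : Type) (r : seq I) (F : I -> R[i]) :
  Normc.normc (\sum_(i <- r) F i) <= \sum_(i <- r) Normc.normc (F i).
Proof.
elim/big_ind2: _ => [|z1 s1 z2 s2 le1 le2|//]; first by rewrite Normc.normc0.
exact: le_trans (le_normcD _ _) (lerD le1 le2).
Qed.

Lemma mem_eigenvalues n (T : 'M[R]_n) z :
  (z \in eigenvalues T) = root (char_poly (complexify T)) z.
Proof.
rewrite /eigenvalues; case: closed_field_poly_normal => r /= ->.
by rewrite (monicP (char_poly_monic _)) scale1r root_prod_XsubC.
Qed.

Lemma eigenvalues_left_eigenvector n (T : 'M[R]_n) z : z \in eigenvalues T ->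
  exists2 v : 'rV[R[i]]_n, v *m complexify T = z *: v & v != 0.
Proof. by rewrite mem_eigenvalues -eigenvalue_root_char => /eigenvalueP. Qed.

Lemma spectral_radius_ge0 n (T : 'M[R]_n) : 0 <= spectral_radius T.
Proof. exact: bigmax_ge_id. Qed.

Lemma normc_le_spectral_radius n (T : 'M[R]_n) z :
  z \in eigenvalues T -> Normc.normc z <= spectral_radius T.
Proof. by move=> z_eig; apply: (le_bigmax_seq _ _ xpredT). Qed.

Lemma scalar_sub_unitmx n (B : 'M[R]_n) t :
  spectral_radius B < t -> t%:M - B \in unitmx.
Proof.
move=> rhoB_lt_t; rewrite unitmxE unitfE; apply/negP => /det0P [v v_neq0].
rewrite mulmxBr mul_mx_scalar => /eqP; rewrite subr_eq0 => /eqP vB.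
have : eigenvalue B t by apply/eigenvalueP; exists v.
rewrite -(eigenvalue_map (real_complex R)) eigenvalue_root_char -mem_eigenvalues.
move=> /normc_le_spectral_radius; rewrite normc_real => t_le_rho.
have t_ge0 : 0 <= t := le_trans (spectral_radius_ge0 B) (ltW rhoB_lt_t).
by move: (le_lt_trans t_le_rho rhoB_lt_t); rewrite ger0_norm // ltxx.
Qed.

(* If z v = v T with |z| >= s, the moduli w of v satisfy w (s I - T) <= 0,
   and multiplying by Y >= 0 gives w <= 0. *)
Lemma spectral_radius_lt_of_inverse_nonneg n (T Y : 'M[R]_n) s :
  nonneg_mx T -> nonneg_mx Y -> 0 < s -> (s%:M - T) *m Y = 1%:M ->
  spectral_radius T < s.
Proof.
move=> T_ge0 Y_ge0 s_gt0 sTY; rewrite /spectral_radius big_seq.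
apply: bigmax_lt => // z /eigenvalues_left_eigenvector [v vT v_neq0].
rewrite ltNge; apply/negP => s_le_z.
pose w := \row_j Normc.normc (v 0 j).
have wT_ge j : Normc.normc z * w 0 j <= (w *m T) 0 j.
  rewrite mxE -Normc.normcM.
  have -> : z * v 0 j = (v *m complexify T) 0 j by rewrite vT mxE.
  rewrite !mxE; apply: le_trans; first exact: normc_sum_le.
  apply: ler_sum => i _.
  by rewrite Normc.normcM !mxE normc_real ger0_norm.
have wsT_le0 j : (w *m (s%:M - T)) 0 j <= 0.
  rewrite mulmxBr mul_mx_scalar mxE [(s *: w) 0 j]mxE [(- (w *m T)) 0 j]mxE.
  rewrite subr_le0.
  apply: le_trans (wT_ge j); rewrite ler_wpM2r // mxE; apply: normc_ge0.
have w0 j : w 0 j = 0.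
  apply/eqP; rewrite eq_le {2}mxE normc_ge0 andbT.
  rewrite -[w]mulmx1 -sTY mulmxA mxE.
  by apply: sumr_le0 => i _; apply: mulr_le0_ge0.
move/negP: v_neq0; apply; apply/eqP/matrixP => i j; rewrite ord1 mxE.
by apply: Normc.eq0_normc; have := w0 j; rewrite mxE.
Qed.

End Spectrum.

Section ScalarShift.
Variables (R : realType) (n : nat) (B : 'M[R]_n).
Hypothesis B_ge0 : nonneg_mx B.

Lemma scalar_sub_mulmx_shift t u (x : 'cV[R]_n) :
  (u%:M - B) *m x = (t%:M - B) *m x + (u - t) *: x.
Proof.
by rewrite -mul_scalar_mx -mulmxDl addrAC -raddfD /= subrKC.
Qed.

Lemma inverse_nonneg_scalar_sub_large u :
  \sum_i \sum_j B i j < u -> inverse_nonneg (u%:M - B).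
Proof.
move=> sumB_lt_u; apply: (@Zmatrix_inverse_nonneg _ _ _ (const_mx 1)).
- exact: Zmatrix_scalar_sub.
- exact: nonneg_const_mx.
move=> i; rewrite mulmxBl mul_scalar_mx !mxE mulr1 subr_gt0.
under eq_bigr => j _ do rewrite mxE mulr1.
apply: le_lt_trans sumB_lt_u.
by apply: ler_term_sum => i'; apply: sumr_ge0.
Qed.

Lemma inverse_nonneg_scalar_sub_open t : inverse_nonneg (t%:M - B) ->
  exists2 d, 0 < d & forall u, t - d <= u -> inverse_nonneg (u%:M - B).
Proof.
case=> tB_unit tB_inv_ge0.
pose x := invmx (t%:M - B) *m (const_mx 1 : 'cV_n).
have x_ge0 : nonneg_mx x by apply: nonneg_mxM => //; apply: nonneg_const_mx.
have tBx : (t%:M - B) *m x = const_mx 1 by rewrite mulmxA mulmxV // mul1mx.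
pose S := \sum_j x j 0.
have S_ge0 : 0 <= S by apply: sumr_ge0.
pose d := (1 + S)^-1.
have d_gt0 : 0 < d by rewrite invr_gt0 ltr_pwDl.
have dS : d * (1 + S) = 1 by rewrite mulVf // gt_eqF // ltr_pwDl.
exists d => // u u_ge; apply: (@Zmatrix_inverse_nonneg _ _ _ x) => //.
  exact: Zmatrix_scalar_sub.
move=> i; rewrite (scalar_sub_mulmx_shift t) tBx.
have -> : (const_mx 1 + (u - t) *: x) i 0 = 1 + (u - t) * x i 0 by rewrite !mxE.
have xi_le_S : x i 0 <= S := ler_term_sum i (fun j => x_ge0 j 0).
have : 0 <= (d - (t - u)) * x i 0 by rewrite mulr_ge0 //; lra.
have : 0 <= d * (S - x i 0) by rewrite mulr_ge0 ?subr_ge0 // ltW.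
nra.
Qed.

(* The vectors x_e := ((t + e) I - B)^-1 1 stay bounded as e -> 0 because
   t I - B is invertible, so (t I - B) x_e = 1 - e x_e > 0 for e small. *)
Lemma inverse_nonneg_scalar_sub_closed t : spectral_radius B < t ->
  (forall u, t < u -> inverse_nonneg (u%:M - B)) -> inverse_nonneg (t%:M - B).
Proof.
move=> rho_lt_t inn_right.
have tB_unit := scalar_sub_unitmx rho_lt_t; set X := invmx (t%:M - B).
pose K := 1 + \sum_i \sum_j `|X i j|.
have K_gt0 : 0 < K by rewrite ltr_pwDl // sumr_ge0 // => i _; apply: sumr_ge0.
pose e := (3 * K)^-1.
have e_gt0 : 0 < e by rewrite invr_gt0 mulr_gt0.
have eK : e * K = 3^-1 by rewrite /e invfM -mulrA mulVf ?gt_eqF // mulr1.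
have [teB_unit teB_inv_ge0] : inverse_nonneg ((t + e)%:M - B).
  by apply: inn_right; rewrite ltrDl.
pose x := invmx ((t + e)%:M - B) *m (const_mx 1 : 'cV_n).
have x_ge0 : nonneg_mx x by apply: nonneg_mxM => //; apply: nonneg_const_mx.
pose w := e *: x.
have w_ge0 : nonneg_mx w by apply: nonneg_mxZ; first exact: ltW.
have tBx : (t%:M - B) *m x = const_mx 1 - w.
  rewrite (scalar_sub_mulmx_shift (t + e)) mulmxA mulmxV // mul1mx.
  by rewrite opprD addrA subrr add0r scaleNr.
have x_eq : x = X *m (const_mx 1 - w) by rewrite -tBx mulmxA mulVmx // mul1mx.
pose S := \big[Order.max/0]_i w i 0.
have S_ge0 : 0 <= S := bigmax_ge_id _ _ _ _.
have w_le_S i : w i 0 <= S := le_bigmax _ _ i.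
have w_le i : w i 0 <= (1 + S) / 3.
  have -> : w i 0 = e * \sum_j X i j * (1 - w j 0).
    rewrite {1}/w mxE {1}x_eq mxE; congr (_ * _).
    by apply: eq_bigr => j _; rewrite !mxE.
  apply: (le_trans (y := e * (K * (1 + S)))); last by rewrite mulrA eK mulrC.
  rewrite ler_pM2l //.
  apply: (le_trans (y := \sum_j `|X i j| * (1 + S))).
    apply: ler_sum => j _; apply: le_trans (ler_norm _) _.
    rewrite normrM ler_wpM2l //.
    by rewrite ler_norml; have := w_ge0 j 0; have := w_le_S j; lra.
  rewrite -mulr_suml ler_wpM2r ?addr_ge0 // /K ler_wpDl //.
  by apply: ler_term_sum => i'; apply: sumr_ge0.
have S_le : S <= 1 / 2.
  have : S <= (1 + S) / 3 by apply: bigmax_le => //; rewrite divr_ge0 ?addr_ge0.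
  lra.
apply: (@Zmatrix_inverse_nonneg _ _ _ x) => //; first exact: Zmatrix_scalar_sub.
move=> i; rewrite tBx [(_ - w) i 0]mxE [const_mx 1 i 0]mxE [(- w) i 0]mxE.
by have := w_le_S i; lra.
Qed.

Lemma inverse_nonneg_scalar_sub s :
  spectral_radius B < s -> inverse_nonneg (s%:M - B).
Proof.
move=> rho_lt_s; have [//|s_bad] := pselect (inverse_nonneg (s%:M - B)).
pose bad := [set u : R | s <= u /\ ~ inverse_nonneg (u%:M - B)]%classic.
have bad_sup : has_sup bad.
  split; first by exists s.
  exists (\sum_i \sum_j B i j) => u [_ u_bad]; rewrite leNgt; apply/negP.
  by move/inverse_nonneg_scalar_sub_large.
pose ts := sup bad.
have s_le_ts : s <= ts by apply: sup_upper_bound.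
have inn_right u : ts < u -> inverse_nonneg (u%:M - B).
  move=> ts_lt_u; have [//|u_bad] := pselect (inverse_nonneg (u%:M - B)).
  have /(sup_upper_bound bad_sup) : bad u.
    by split=> //; apply: le_trans (ltW ts_lt_u).
  by rewrite leNgt ts_lt_u.
have ts_inn : inverse_nonneg (ts%:M - B).
  apply: inverse_nonneg_scalar_sub_closed inn_right.
  exact: lt_le_trans rho_lt_s s_le_ts.
have [d d_gt0 inn_near] := inverse_nonneg_scalar_sub_open ts_inn.
have [u [_ u_bad] ts_d_lt_u] := sup_adherent d_gt0 bad_sup.
by exfalso; apply/u_bad/inn_near/ltW.
Qed.

End ScalarShift.

Section Splittings.
Variable R : realType.

Lemma inverse_nonneg_mul n (A B : 'M[R]_n) :
  inverse_nonneg A -> inverse_nonneg B -> inverse_nonneg (A *m B).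
Proof.
case=> A_unit A_inv_ge0 [B_unit B_inv_ge0].
have AB_unit : A *m B \in unitmx by rewrite unitmx_mul A_unit.
have AB_inv : A *m B *m (invmx B *m invmx A) = 1%:M.
  by rewrite mulmxA -(mulmxA A) mulmxV // mulmx1 mulmxV.
split=> //; rewrite -[invmx (A *m B)]mulmx1 -AB_inv mulmxA mulVmx // mul1mx.
exact: nonneg_mxM.
Qed.

Lemma invertible_M_matrix_inverse_nonneg n (A : 'M[R]_n) :
  invertible_M_matrix A -> inverse_nonneg A.
Proof.
by case=> s [B [B_ge0 [rho_lt_s ->]]]; apply: inverse_nonneg_scalar_sub.
Qed.

Lemma invertible_M_matrix_Zmatrix n (A : 'M[R]_n) :
  invertible_M_matrix A -> Zmatrix A.
Proof. by case=> s [B [B_ge0 [_ ->]]]; apply: Zmatrix_scalar_sub. Qed.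

Lemma splitting_shift_inverse_nonneg n (M N : 'M[R]_n) a :
  inverse_nonneg M -> nonneg_mx N -> spectral_radius (invmx M *m N) < a ->
  inverse_nonneg (a *: M - N).
Proof.
move=> [M_unit M_inv_ge0] N_ge0 rho_lt_a.
have -> : a *: M - N = M *m (a%:M - invmx M *m N).
  by rewrite mulmxBr mul_mx_scalar mulmxA mulmxV // mul1mx.
apply: inverse_nonneg_mul => //; apply: inverse_nonneg_scalar_sub => //.
exact: nonneg_mxM.
Qed.

Lemma splitting_spectral_radius_lt n (M N : 'M[R]_n) a :
  inverse_nonneg M -> nonneg_mx N -> 0 < a -> inverse_nonneg (a *: M - N) ->
  spectral_radius (invmx M *m N) < a.
Proof.
move=> [M_unit M_inv_ge0] N_ge0 a_gt0.
set C := a *: M - N => -[C_unit C_inv_ge0].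
have CN : C + N = a *: M by rewrite subrK.
apply: (@spectral_radius_lt_of_inverse_nonneg _ _ _ (invmx C *m M)) => //.
- exact: nonneg_mxM.
- have -> : invmx C *m M = a^-1 *: (1%:M + invmx C *m N).
    rewrite -(mulVmx C_unit) -mulmxDr CN -scalemxAr scalerA mulVf ?scale1r //.
    by rewrite gt_eqF.
  apply: nonneg_mxZ; first by rewrite invr_ge0 ltW.
  by apply: nonneg_mxD; [apply: nonneg_scalar_mx | apply: nonneg_mxM].
- have -> : a%:M - invmx M *m N = invmx M *m C.
    by rewrite mulmxBr -scalemxAr mulVmx // scalemx1.
  by rewrite mulmxA -(mulmxA (invmx M)) mulmxV // mulmx1 mulVmx.
Qed.

End Splittings.

Section BlockSplittings.
Variables (R : realType) (k l : nat) (A12 : 'M[R]_(k, l)) (A21 : 'M[R]_(l, k)).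
Variables (M11 N11 : 'M[R]_k) (M22 N22 : 'M[R]_l) (M21 N21 : 'M[R]_(l, k)).
Hypothesis A21E : A21 = M21 - N21.

Lemma shifted_splittings_intertwine a :
  (a *: block_mx M11 A12 0 M22 - block_mx N11 0 (- A21) N22)
    *m block_mx a%:M 0 0 1%:M
  = block_mx a%:M 0 0 1%:M
      *m (a *: block_mx M11 0 M21 M22 - block_mx N11 (- A12) N21 N22)
    + block_mx 0 0 ((1 - a) *: N21) 0.
Proof.
rewrite !scale_block_mx !opp_block_mx !add_block_mx !mulmx_block !add_block_mx.
rewrite !mulmx0 !mul0mx !mulmx1 !mul1mx !mul_mx_scalar !mul_scalar_mx.
rewrite !scaler0 !oppr0 !addr0 !add0r !opprK A21E.
by congr block_mx; apply/matrixP => i j; rewrite !mxE; ring.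
Qed.

Lemma hat_shift_inverse_nonneg a : 0 < a <= 1 -> nonneg_mx N21 ->
  Zmatrix (block_mx M11 A12 0 M22) -> nonneg_mx (block_mx N11 0 (- A21) N22) ->
  inverse_nonneg (a *: block_mx M11 0 M21 M22 - block_mx N11 (- A12) N21 N22) ->
  inverse_nonneg (a *: block_mx M11 A12 0 M22 - block_mx N11 0 (- A21) N22).
Proof.
move=> /andP [a_gt0 a_le1] N21_ge0 Mh_Z Nh_ge0 [C'_unit C'_inv_ge0].
set C' := _ - block_mx N11 _ _ _ in C'_unit C'_inv_ge0.
pose D := block_mx a%:M 0 0 1%:M : 'M[R]_(k + l).
pose E := block_mx 0 0 ((1 - a) *: N21) 0 : 'M[R]_(k + l).
pose x := invmx C' *m (const_mx 1 : 'cV_(k + l)).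
have D_ge0 : nonneg_mx D.
  apply: nonneg_block_mx; try exact: nonneg_mx0; apply: nonneg_scalar_mx => //.
  exact: ltW.
have D_diag_gt0 i : 0 < D i i.
  by rewrite /D; case: (split_ordP i) => i' ->;
    rewrite ?block_mxEul ?block_mxEdr mxE eqxx mulr1n.
have E_ge0 : nonneg_mx E.
  apply: nonneg_block_mx; try exact: nonneg_mx0.
  by apply: nonneg_mxZ; rewrite // subr_ge0.
have x_ge0 : nonneg_mx x by apply: nonneg_mxM => //; apply: nonneg_const_mx.
have C'x : C' *m x = const_mx 1 by rewrite mulmxA mulmxV // mul1mx.
apply: (@Zmatrix_inverse_nonneg _ _ _ (D *m x)).
- exact: Zmatrix_scale_sub (ltW a_gt0) Mh_Z Nh_ge0.
- exact: nonneg_mxM.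
move=> i; rewrite mulmxA shifted_splittings_intertwine mulmxDl -mulmxA C'x mxE.
apply: ltr_wpDr; first exact: nonneg_mxM.
rewrite mxE; apply: lt_le_trans (ler_term_sum i _) => [|j];
  rewrite [const_mx _ _ _]mxE mulr1.
  exact: D_diag_gt0.
exact: D_ge0.
Qed.

End BlockSplittings.

Unset Implicit Arguments.
Set Strict Implicit.

Theorem corollary3 (R : realType) (k l : nat)
  (A11 : 'M[R]_k) (A12 : 'M[R]_(k, l)) (A21 : 'M[R]_(l, k)) (A22 : 'M[R]_l)
  (M11 N11 : 'M[R]_k) (M22 N22 : 'M[R]_l) (M21 N21 : 'M[R]_(l, k)) :
  let A := block_mx A11 A12 A21 A22 in
  let M' := block_mx M11 0 M21 M22 in
  let N' := block_mx N11 (- A12) N21 N22 in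
  let Mh := block_mx M11 A12 0 M22 in
  let Nh := block_mx N11 0 (- A21) N22 in
  invertible_M_matrix A ->
  regular_splitting A M' N' ->
  regular_splitting A Mh Nh ->
  spectral_radius (invmx Mh *m Nh) <= spectral_radius (invmx M' *m N').
Proof.
move=> A M' N' Mh Nh A_M [M'_M [N'_ge0 AM'N']] [Mh_M [Nh_ge0 AMhNh]].
have M'_inn := invertible_M_matrix_inverse_nonneg M'_M.
have Mh_inn := invertible_M_matrix_inverse_nonneg Mh_M.
have A21E : A21 = M21 - N21.
  by move: AM'N'; rewrite /A /M' /N' opp_block_mx add_block_mx => /eq_block_mx [].
have N21_ge0 : nonneg_mx N21.
  by move=> i j; have := N'_ge0 (rshift k i) (lshift l j); rewrite block_mxEdl.
apply/ler_addgt0Pr => e e_gt0; set a := _ + e.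
have rho'_lt_a : spectral_radius (invmx M' *m N') < a by rewrite ltrDl.
have a_gt0 : 0 < a := le_lt_trans (spectral_radius_ge0 _) rho'_lt_a.
apply: ltW; have [a_ge1 | a_lt1] := leP 1 a.
  apply: lt_le_trans a_ge1; apply: splitting_spectral_radius_lt => //.
  by rewrite scale1r -AMhNh; apply: invertible_M_matrix_inverse_nonneg.
apply: splitting_spectral_radius_lt => //.
apply: (hat_shift_inverse_nonneg A21E) => //.
- by rewrite a_gt0 ltW.
- exact: invertible_M_matrix_Zmatrix.
- exact: splitting_shift_inverse_nonneg.
Qed.
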